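(* Let $G\in\Gamma$ be twin-free. (1) If some vertex of $G$ has degree at least $3$, then $G$ has an induced subgraph isomorphic to one of the three bipartite graphs with biadjacency matrices \[\begin{bmatrix}1&0&0\\1&1&1\\0&0&1\end{bmatrix},\qquad \begin{bmatrix}1&1&0\\1&1&1\\0&1&0\end{bmatrix},\qquad \begin{bmatrix}1&1&0\\1&1&1\\0&1&1\end{bmatrix}.\] (2) If $1<\|G\|<\eta_4$, where $\eta_4=\frac1{15}\sqrt{169+38\sqrt{19}}$, then every vertex of $G$ has degree at most $2$ and some vertex has degree exactly $2$ (i.e. $\deg(G)=2$).
   Context: $\Gamma$ is the collection of all bipartite graphs $G\subseteq R\times C$ with $|R|,|C|\in\{1,2,\dots\}\cup\{\aleph_0\}$; enumerating $R=\{r_i\}$, $C=\{c_j\}$, the biadjacency matrix $M(G)$ has $(i,j)$ entry $1$ if $(r_i,c_j)$ is an edge and $0$ otherwise. $\|G\|$ denotes the Schur norm $\|M(G)\|_\bullet=\sup\{\|M(G)\bullet X\|:\|X\|\le1\}$ (entrywise product, operator norm on $\ell^2$ spaces over $\mathbb F\in\{\mathbb R,\mathbb C\}$; possibly $\infty$). An induced subgraph of $G$ is $G\cap(R_0\times C_0)$ for $R_0\subseteq R$, $C_0\subseteq C$; graphs are considered up to isomorphism, where isomorphisms may swap the two sides of the bipartition. Two vertices are twins if they have the same neighbour sets; $G$ is twin-free if no two distinct vertices are twins. $\deg(G)$ is the maximum vertex degree. *)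

From HB Require Import structures.
From mathcomp Require Import all_boot all_order all_algebra.
From mathcomp Require Import boolp classical_sets reals constructive_ereal ereal.
From mathcomp Require Import complex.
Set Implicit Arguments.
Unset Strict Implicit.
Unset Printing Implicit Defensive.
Import Order.TTheory GRing.Theory Num.Theory.
Local Open Scope ring_scope.
Local Open Scope classical_set_scope.

(* A bipartite graph G ⊆ R × C is given by two countable (finite or countably
   infinite) vertex types Rv, Cv (assumed nonempty in the theorem) and an
   edge relation E : Rv -> Cv -> bool.  Its biadjacency matrix has entry
   (r,c) equal to 1 iff E r c. *)

Section Norms.
Variables (R : realType) (K : fieldType) (nrm : K -> R) (cj : K -> K).

(* Operator norm (in [0, +oo]) of the matrix A : I x J -> K acting
   ell^2(J) -> ell^2(I): the supremum of |<y, A x>| over finitely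
   supported x, y of ell^2-norm at most 1. *)
Definition opnorm_gen (I J : countType) (A : I -> J -> K) : \bar R :=
  ereal_sup [set e : \bar R | exists (rs : seq I) (cs : seq J)
                                   (y : I -> K) (x : J -> K),
      [/\ uniq rs, uniq cs,
          \sum_(i <- rs) nrm (y i) ^+ 2 <= 1,
          \sum_(j <- cs) nrm (x j) ^+ 2 <= 1 &
          e = (nrm (\sum_(i <- rs) \sum_(j <- cs) cj (y i) * A i j * x j))%:E]].

Definition schur_gen (I J : countType) (E : I -> J -> bool) : \bar R :=
  ereal_sup [set e : \bar R | exists X : I -> J -> K,
      (opnorm_gen X <= 1%:E)%E /\
      e = opnorm_gen (fun i j => if E i j then X i j else 0)].
End Norms.

Definition schur_norm (R : realType) (cplx : bool) (I J : countType)
    (E : I -> J -> bool) : \bar R :=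
  if cplx then schur_gen (@ComplexField.Normc.normc R) (@conjc R) E
  else schur_gen (fun x : R => `|x|) id E.

Definition twin_free (I J : Type) (E : I -> J -> bool) : Prop :=
  (forall r r' : I, (forall c, E r c = E r' c) -> r = r') /\
  (forall c c' : J, (forall r, E r c = E r c') -> c = c').

(* Vertex degree at least k (degrees may be infinite). *)
Definition row_deg_ge (I J : Type) (E : I -> J -> bool) (r : I) (k : nat) :=
  exists f : 'I_k -> J, injective f /\ forall t, E r (f t).
Definition col_deg_ge (I J : Type) (E : I -> J -> bool) (c : J) (k : nat) :=
  exists f : 'I_k -> I, injective f /\ forall t, E (f t) c.

Definition some_deg_ge (I J : Type) (E : I -> J -> bool) (k : nat) : Prop :=
  (exists r, row_deg_ge E r k) \/ (exists c, col_deg_ge E c k).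

Definition maxdeg_eq2 (I J : Type) (E : I -> J -> bool) : Prop :=
  ~ some_deg_ge E 3 /\ some_deg_ge E 2.

Definition mx33 (rows : seq (seq bool)) (i j : 'I_3) : bool :=
  nth false (nth [::] rows i) j.

Definition B1 := mx33 [:: [:: true; false; false];
                          [:: true; true; true];
                          [:: false; false; true]].
Definition B2 := mx33 [:: [:: true; true; false];
                          [:: true; true; true];
                          [:: false; true; false]].
Definition B3 := mx33 [:: [:: true; true; false];
                          [:: true; true; true];
                          [:: false; true; true]].

(* G has an induced subgraph isomorphic to the bipartite graph with
   biadjacency matrix B (isomorphisms may swap the two sides, which
   corresponds to transposing B). *)
Definition has_induced (I J : Type) (E : I -> J -> bool)
    (B : 'I_3 -> 'I_3 -> bool) : Prop :=
  exists (f : 'I_3 -> I) (g : 'I_3 -> J), injective f /\ injective g /\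
    ((forall a b, E (f a) (g b) = B a b) \/
     (forall a b, E (f a) (g b) = B b a)).

Definition eta4 (R : realType) : R :=
  Num.sqrt (169 + 38 * Num.sqrt 19) / 15.

From HB Require Import structures.
From mathcomp Require Import all_boot all_order all_algebra.
From mathcomp Require Import boolp classical_sets reals constructive_ereal ereal.
From mathcomp Require Import complex.
From mathcomp Require Import ring lra.
Import Order.TTheory GRing.Theory Num.Theory.

Set Implicit Arguments.
Unset Strict Implicit.
Unset Printing Implicit Defensive.

(* (1) Let [r] have neighbours [c0, c1, c2].  By twin-freeness some row separates [c0]
   and [c1]; a nonconstant row on three columns separates exactly two of the three
   pairs, so with one more separating row we get rows [s], [s'] separating all pairs.
   The rows [s], [r], [s'] on the columns [c0, c1, c2] then induce, up to reordering,
   one of [B1], [B2], [B3] -- a finite check.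
   (2) The Schur norm of [G] is at least [y^T (M(H) • U) x] for every induced
   subgraph [H] on three rows and columns, orthogonal [U] and real unit vectors [y],
   [x], since [U] extended by zero is a contraction.  For [U] in the family
   [rot_mx c e] and explicit [y], [x] this gives [eta4] for each of [B1], [B2], [B3],
   so by (1) [||G|| < eta4] forces [deg G <= 2].  If [deg G <= 1] then for every
   contraction [X] the entries of [M(G) • X] have modulus at most 1 and form a partial
   matching, so [||G|| <= 1] by AM-GM. *)

Definition o0 : 'I_3 := Ordinal (isT : (0 < 3)%N).
Definition o1 : 'I_3 := Ordinal (isT : (1 < 3)%N).
Definition o2 : 'I_3 := Ordinal (isT : (2 < 3)%N).

Lemma ord3_ind (P : 'I_3 -> Prop) : P o0 -> P o1 -> P o2 -> forall a, P a.
Proof.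
move=> P0 P1 P2 [[|[|[|n]]] lt_n3] //.
- by rewrite (_ : Ordinal _ = o0) //; apply: val_inj.
- by rewrite (_ : Ordinal _ = o1) //; apply: val_inj.
- by rewrite (_ : Ordinal _ = o2) //; apply: val_inj.
Qed.

Definition vec3 {T : Type} (x0 x1 x2 : T) (a : 'I_3) : T :=
  match val a with 0 => x0 | 1 => x1 | _ => x2 end.

Lemma vec3E (T : Type) (x0 x1 x2 : T) :
  (vec3 x0 x1 x2 o0 = x0) * (vec3 x0 x1 x2 o1 = x1) * (vec3 x0 x1 x2 o2 = x2).
Proof. by []. Qed.

Lemma vec3_eta (T : Type) (p : 'I_3 -> T) : vec3 (p o0) (p o1) (p o2) = p.
Proof. by apply/funext; elim/ord3_ind. Qed.

Lemma vec3_inj (T : eqType) (x0 x1 x2 : T) : uniq [:: x0; x1; x2] ->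
  injective (vec3 x0 x1 x2).
Proof.
rewrite /= !inE negb_or andbT => /andP[/andP[n01 n02] n12] a b.
elim/ord3_ind: a; elim/ord3_ind: b; rewrite !vec3E // => eq_ab;
  by move: n01 n02 n12; rewrite eq_ab !eqxx.
Qed.

Definition ords3 : seq 'I_3 := [:: o0; o1; o2].

Lemma mem_ords3 (a : 'I_3) : a \in ords3.
Proof. by elim/ord3_ind: a. Qed.

Lemma sum3 (V : nmodType) (F : 'I_3 -> V) :
  (\sum_(a < 3) F a = F o0 + F o1 + F o2)%R.
Proof.
rewrite !big_ord_recr big_ord0 /= GRing.add0r.
by congr (F _ + F _ + F _)%R; apply: val_inj.
Qed.

Lemma twin_free_B123 : [/\ twin_free B1, twin_free B2 & twin_free B3].
Proof.
by split; split=> a a' eqa; move: (eqa o0) (eqa o1) (eqa o2); clear eqa;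
  elim/ord3_ind: a; elim/ord3_ind: a'.
Qed.

Lemma twin_free_match_inj (I J : Type) (E : I -> J -> bool) (B : 'I_3 -> 'I_3 -> bool)
    (f : 'I_3 -> I) (g : 'I_3 -> J) :
  twin_free B -> (forall a b, E (f a) (g b) = B a b) -> injective f /\ injective g.
Proof.
move=> [tfR tfC] fgB; split.
- by move=> a a' eq_f; apply: tfR => b; rewrite -!fgB eq_f.
- by move=> b b' eq_g; apply: tfC => a; rewrite -!fgB eq_g.
Qed.

Lemma has_induced_transpose (I J : Type) (E : I -> J -> bool) B :
  has_induced (fun j i => E i j) B -> has_induced E B.
Proof. by move=> [f [g [fi [gi [fgB|fgB]]]]]; exists g, f; do 2 split => //; [right|left]. Qed.

(* A finite search, so that [separating_patterns_realize] is decided by computation. *)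
Definition realizes (p q : 'I_3 -> bool) (B : 'I_3 -> 'I_3 -> bool) : bool :=
  has (fun c0 => has (fun c1 => has (fun c2 => all (fun a => all (fun b =>
    vec3 p (fun=> true) q a (vec3 c0 c1 c2 b) == B a b) ords3) ords3)
  ords3) ords3) ords3.

Lemma realizesP p q B : realizes p q B ->
  exists col : 'I_3 -> 'I_3, forall a b, vec3 p (fun=> true) q a (col b) = B a b.
Proof.
case/hasP=> c0 _ /hasP[c1 _ /hasP[c2 _ /allP pqB]].
by exists (vec3 c0 c1 c2) => a b; apply/eqP/(allP (pqB a (mem_ords3 a)))/mem_ords3.
Qed.

Definition separates3 (p q : 'I_3 -> bool) : bool :=
  [&& (p o0 != p o1) || (q o0 != q o1), (p o0 != p o2) || (q o0 != q o2)
    & (p o1 != p o2) || (q o1 != q o2)].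

Lemma separating_patterns_realize (p q : 'I_3 -> bool) : separates3 p q ->
  [|| realizes p q B1 || realizes q p B1, realizes p q B2 || realizes q p B2
    | realizes p q B3 || realizes q p B3].
Proof.
rewrite -(vec3_eta p) -(vec3_eta q) /separates3 /=.
by move: (p o0) (p o1) (p o2) (q o0) (q o1) (q o2); do 6!case; vm_compute.
Qed.

Section ColumnTwinFree.
Variables (I J : Type) (E : I -> J -> bool).
Hypothesis tfC : forall c c' : J, (forall r, E r c = E r c') -> c = c'.

Lemma separating_row (c c' : J) : c <> c' -> exists s, E s c != E s c'.
Proof.
move=> neq_cc'; apply: contrapT => /forallNP noSep; apply/neq_cc'/tfC => s.
by apply/eqP/negbNE/negP/noSep.
Qed.

Lemma separating_rows (g : 'I_3 -> J) : injective g ->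
  exists s s', separates3 (E s \o g) (E s' \o g).
Proof.
move=> g_inj; have neq_g (a b : 'I_3) : val a != val b -> g a <> g b.
  by move=> neq_ab /g_inj eq_ab; rewrite eq_ab eqxx in neq_ab.
have [s1 sep01] := separating_row (neq_g o0 o1 isT).
have [s2 sep02] := separating_row (neq_g o0 o2 isT).
have [s3 sep12] := separating_row (neq_g o1 o2 isT).
have [sep02'|] := boolP (E s1 (g o0) != E s1 (g o2)).
  by exists s1, s3; apply/and3P; rewrite /= sep01 sep02' sep12 orbT.
move/negPn/eqP=> eq02; exists s1, s2.
by apply/and3P; rewrite /= sep01 sep02 -eq02 [E s1 (g o1) == _]eq_sym sep01 orbT.
Qed.

Lemma has_induced_of_realizes (r s s' : I) (g : 'I_3 -> J) B :
  twin_free B -> (forall b, E r (g b)) -> realizes (E s \o g) (E s' \o g) B ->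
  has_induced E B.
Proof.
move=> tfB rg /realizesP[col pat].
have fgB a b : E (vec3 s r s' a) (g (col b)) = B a b.
  by rewrite -pat; elim/ord3_ind: a => //=; rewrite rg.
have [f_inj g_inj] := twin_free_match_inj tfB fgB.
by exists (vec3 s r s'), (g \o col); do 2 split => //; left.
Qed.

Lemma induced_of_row_deg3 (r : I) : row_deg_ge E r 3 ->
  has_induced E B1 \/ has_induced E B2 \/ has_induced E B3.
Proof.
case=> g [g_inj rg]; have [s [s' /separating_patterns_realize]] := separating_rows g_inj.
have [tf1 tf2 tf3] := twin_free_B123.
case/or3P=> /orP[] pat; [left|left|right; left|right; left|right; right|right; right];
  exact: has_induced_of_realizes pat.
Qed.

End ColumnTwinFree.

Lemma induced_of_deg3 (I J : Type) (E : I -> J -> bool) : twin_free E ->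
  some_deg_ge E 3 -> has_induced E B1 \/ has_induced E B2 \/ has_induced E B3.
Proof.
move=> [tfR tfC] [[r /(induced_of_row_deg3 tfC)] //|[c]].
by move/(@induced_of_row_deg3 _ _ (fun j i => E i j) tfR) => [|[|]] /has_induced_transpose; auto.
Qed.

Lemma pair_inj (T : Type) (x x' : T) : x <> x' ->
  injective (fun t : 'I_2 => if t == ord0 then x else x').
Proof.
move=> neq [[|[|?]] ?] [[|[|?]] ?] //= eq_xx';
  by [apply: val_inj | case: neq].
Qed.

Lemma matching_of_maxdeg1 (I J : Type) (E : I -> J -> bool) : ~ some_deg_ge E 2 ->
  (forall i j j', E i j -> E i j' -> j = j') /\ (forall i i' j, E i j -> E i' j -> i = i').
Proof.
move=> no_deg2; split=> [i j j' Eij Eij'|i i' j Eij Ei'j]; apply: contrapT => neq;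
  apply: no_deg2.
- left; exists i, (fun t : 'I_2 => if t == ord0 then j else j').
  by split=> [|t]; [exact: pair_inj | case: ifP].
- right; exists j, (fun t : 'I_2 => if t == ord0 then i else i').
  by split=> [|t]; [exact: pair_inj | case: ifP].
Qed.

Local Open Scope ring_scope.

Section Rotation.
Variable R : realType.

Definition rot_mx (c e : R) : 'I_3 -> 'I_3 -> R :=
  vec3 (vec3 ((1 + c) / 2) (- e) ((c - 1) / 2)) (vec3 e c e)
       (vec3 ((c - 1) / 2) (- e) ((1 + c) / 2)).

Lemma rot_mx_tr (c e : R) a b : rot_mx c (- e) a b = rot_mx c e b a.
Proof. by elim/ord3_ind: a; elim/ord3_ind: b; rewrite /rot_mx !vec3E ?opprK. Qed.

Lemma rot_mx_isometry (c e : R) (m : 'I_3 -> R) : c ^+ 2 + 2 * e ^+ 2 = 1 ->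
  \sum_a (\sum_b rot_mx c e a b * m b) ^+ 2 = \sum_b m b ^+ 2.
Proof.
move=> ce1; apply/eqP; rewrite -subr_eq0; apply/eqP.
transitivity ((c ^+ 2 + 2 * e ^+ 2 - 1) * ((m o0 + m o2) ^+ 2 / 2 + m o1 ^+ 2)).
  by rewrite !sum3 /rot_mx !vec3E; field.
by rewrite ce1 subrr mul0r.
Qed.

(* Lagrange's identity in C^3 with [y = p + i q], [w = M + i N]: the defect is
   [\sum_(a < b) |y_a w_b - y_b w_a|^2]. *)
Lemma lagrange_ineq3 (p0 p1 p2 q0 q1 q2 M0 M1 M2 N0 N1 N2 : R) :
  (p0 * M0 + q0 * N0 + (p1 * M1 + q1 * N1) + (p2 * M2 + q2 * N2)) ^+ 2 +
  (p0 * N0 - q0 * M0 + (p1 * N1 - q1 * M1) + (p2 * N2 - q2 * M2)) ^+ 2 <=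
  (p0 ^+ 2 + q0 ^+ 2 + (p1 ^+ 2 + q1 ^+ 2) + (p2 ^+ 2 + q2 ^+ 2)) *
  (M0 ^+ 2 + N0 ^+ 2 + (M1 ^+ 2 + N1 ^+ 2) + (M2 ^+ 2 + N2 ^+ 2)).
Proof.
set lhs := (_ + _)%R.
have -> : ((p0 ^+ 2 + q0 ^+ 2 + (p1 ^+ 2 + q1 ^+ 2) + (p2 ^+ 2 + q2 ^+ 2)) *
  (M0 ^+ 2 + N0 ^+ 2 + (M1 ^+ 2 + N1 ^+ 2) + (M2 ^+ 2 + N2 ^+ 2)) = lhs +
  ((p0 * M1 - q0 * N1 - p1 * M0 + q1 * N0) ^+ 2 + (p0 * N1 + q0 * M1 - p1 * N0 - q1 * M0) ^+ 2 +
   (p0 * M2 - q0 * N2 - p2 * M0 + q2 * N0) ^+ 2 + (p0 * N2 + q0 * M2 - p2 * N0 - q2 * M0) ^+ 2 +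
   (p1 * M2 - q1 * N2 - p2 * M1 + q2 * N1) ^+ 2 + (p1 * N2 + q1 * M2 - p2 * N1 - q2 * M1) ^+ 2))%R.
  by rewrite /lhs; ring.
by rewrite lerDl !addr_ge0 ?sqr_ge0.
Qed.

Local Open Scope complex_scope.

Lemma normc_sqr (z : R[i]) : Normc.normc z ^+ 2 = complex.Re z ^+ 2 + complex.Im z ^+ 2.
Proof. by case: z => a b /=; rewrite sqr_sqrtr // addr_ge0 ?sqr_ge0. Qed.

Lemma cauchy_schwarz3 (y w : 'I_3 -> R[i]) :
  Normc.normc (\sum_a (y a)^* * w a) ^+ 2 <=
    (\sum_a Normc.normc (y a) ^+ 2) * (\sum_a Normc.normc (w a) ^+ 2).
Proof.
rewrite !sum3 !normc_sqr.
move: (y o0) (y o1) (y o2) (w o0) (w o1) (w o2) => [? ?] [? ?] [? ?] [? ?] [? ?] [? ?] /=.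
by rewrite !mulNr !opprK; apply: lagrange_ineq3.
Qed.

Lemma rot_mx_normc_isometry (c e : R) (x : 'I_3 -> R[i]) : c ^+ 2 + 2 * e ^+ 2 = 1 ->
  \sum_a Normc.normc (\sum_b (rot_mx c e a b)%:C * x b) ^+ 2 =
    \sum_b Normc.normc (x b) ^+ 2.
Proof.
move=> ce1; rewrite -(vec3_eta x).
move: (x o0) (x o1) (x o2) => [m0 n0] [m1 n1] [m2 n2].
have := rot_mx_isometry (vec3 m0 m1 m2) ce1; have := rot_mx_isometry (vec3 n0 n1 n2) ce1.
rewrite !sum3 !normc_sqr /rot_mx !vec3E /= => iso_n iso_m.
lra.
Qed.

Lemma normc_ge0 (z : R[i]) : 0 <= Normc.normc z.
Proof. by case: z => a b; apply: sqrtr_ge0. Qed.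

Lemma normc_conj (z : R[i]) : Normc.normc z^* = Normc.normc z.
Proof. by case: z => a b /=; rewrite sqrrN. Qed.

Lemma normc_real (r : R) : Normc.normc r%:C = `|r|.
Proof. by rewrite /= expr0n addr0 sqrtr_sqr. Qed.

Lemma rot_mx_contraction (c e : R) (y x : 'I_3 -> R[i]) : c ^+ 2 + 2 * e ^+ 2 = 1 ->
  \sum_a Normc.normc (y a) ^+ 2 <= 1 -> \sum_b Normc.normc (x b) ^+ 2 <= 1 ->
  Normc.normc (\sum_a \sum_b (y a)^* * (rot_mx c e a b)%:C * x b) <= 1.
Proof.
move=> ce1 y1 x1; rewrite -(@expr_le1 _ 2) ?normc_ge0 //.
pose w a := \sum_b (rot_mx c e a b)%:C * x b.
have -> : \sum_a \sum_b (y a)^* * (rot_mx c e a b)%:C * x b = \sum_a (y a)^* * w a.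
  by apply: eq_bigr => a _; rewrite mulr_sumr; apply: eq_bigr => b _; rewrite mulrA.
apply: le_trans (cauchy_schwarz3 y w) _.
rewrite rot_mx_normc_isometry // mulr_ile1 ?sumr_ge0 // => a _; exact: sqr_ge0.
Qed.

Lemma rot_mx_contraction_real (c e : R) (y x : 'I_3 -> R) : c ^+ 2 + 2 * e ^+ 2 = 1 ->
  \sum_a `|y a| ^+ 2 <= 1 -> \sum_b `|x b| ^+ 2 <= 1 ->
  `|\sum_a \sum_b y a * rot_mx c e a b * x b| <= 1.
Proof.
move=> ce1 y1 x1.
have := @rot_mx_contraction c e (fun a => (y a)%:C) (fun b => (x b)%:C) ce1.
rewrite !(eq_bigr _ (fun a _ => congr1 (fun t => t ^+ 2) (normc_real _))) => /(_ y1 x1).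
congr (_ <= _); rewrite -normc_real !rmorph_sum; congr Normc.normc.
apply: eq_bigr => a _; rewrite rmorph_sum; apply: eq_bigr => b _.
by rewrite !rmorphM; congr (_ * _ * _); apply: conjc_real.
Qed.

End Rotation.

Section Witnesses.
Variable R : realType.

(* Certifies that [B], with rows and columns reordered by [sg] and [tu], has Schur
   multiplier norm at least [eta]: test it on the orthogonal matrix [rot_mx c e] and
   the unit vectors [y], [x]. *)
Definition rot_witness (B : 'I_3 -> 'I_3 -> bool) (eta : R) : Prop :=
  exists (sg tu : 'I_3 -> 'I_3) (c e : R) (y x : 'I_3 -> R),
    [/\ injective sg /\ injective tu, c ^+ 2 + 2 * e ^+ 2 = 1,
        \sum_a y a ^+ 2 <= 1, \sum_b x b ^+ 2 <= 1 &
        eta <= \sum_a \sum_b y a * (if B (sg a) (tu b) then rot_mx c e a b else 0) * x b].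

Lemma eta4_sqr : eta4 R ^+ 2 = (169 + 38 * Num.sqrt 19) / 225.
Proof. by rewrite /eta4 expr_div_n sqr_sqrtr ?addr_ge0 ?mulr_ge0 ?sqrtr_ge0 //; lra. Qed.

Lemma eta4_le : eta4 R <= 123 / 100.
Proof.
have sqrt19_le : Num.sqrt (19 : R) <= 9 / 2.
  by rewrite -[9 / 2 : R]ger0_norm // -sqrtr_sqr ler_sqrt //; lra.
rewrite -(@ler_pXn2r _ 2) ?nnegrE ?divr_ge0 ?sqrtr_ge0 // eta4_sqr; lra.
Qed.

Lemma sqr_inj_ge0 (p q : R) : 0 <= p -> 0 <= q -> p ^+ 2 = q ^+ 2 -> p = q.
Proof. by move=> p0 q0 /eqP; rewrite eqrXn2 // => /eqP. Qed.

Lemma rot_witness_B1 : rot_witness B1 (eta4 R).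
Proof.
set w := Num.sqrt (19 : R).
have w0 : 0 <= w by exact: sqrtr_ge0.
have w2 : w ^+ 2 = 19 by rewrite sqr_sqrtr.
have w7 : w < 7 by nra.
set s := Num.sqrt ((10 - w) / 30); have s0 : 0 <= s by exact: sqrtr_ge0.
have s2 : s ^+ 2 = (10 - w) / 30 by rewrite sqr_sqrtr //; lra.
set t := Num.sqrt ((5 + w) / 15); have t0 : 0 <= t by exact: sqrtr_ge0.
have t2 : t ^+ 2 = (5 + w) / 15 by rewrite sqr_sqrtr //; lra.
set u := Num.sqrt ((8 + w) / 30); have u0 : 0 <= u by exact: sqrtr_ge0.
have u2 : u ^+ 2 = (8 + w) / 30 by rewrite sqr_sqrtr //; lra.
set v := Num.sqrt ((7 - w) / 15); have v0 : 0 <= v by exact: sqrtr_ge0.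
have v2 : v ^+ 2 = (7 - w) / 15 by rewrite sqr_sqrtr //; lra.
set eta := eta4 R.
have eta0 : 0 <= eta by rewrite /eta /eta4 divr_ge0 ?sqrtr_ge0.
have eta2 : eta ^+ 2 = (169 + 38 * w) / 225 by exact: eta4_sqr.
set a := s * u; set b := t * v.
have a0 : 0 <= a by rewrite mulr_ge0.
have a2 : a ^+ 2 = (61 + 2 * w) / 900 by rewrite exprMn s2 u2; lra.
have b2 : b ^+ 2 = (16 + 2 * w) / 225 by rewrite exprMn t2 v2; lra.
have tu2 : (t * u) ^+ 2 = (59 + 13 * w) / 450 by rewrite exprMn t2 u2; lra.
have a_eta : a * eta = (83 + 16 * w) / 450.
  by apply: sqr_inj_ge0; [rewrite mulr_ge0 | lra | rewrite exprMn a2 eta2; lra].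
have ab : a * b = (11 + 7 * w) / 450.
  by apply: sqr_inj_ge0; [rewrite !mulr_ge0 | lra | rewrite exprMn a2 b2; lra].
(* The value is [a + c (a + b) + 2 e t u]; the choice of [(c, e)] maximises it on
   the ellipse [c ^+ 2 + 2 * e ^+ 2 = 1], giving [a + N] with [N] as below. *)
set N := eta - a.
have N2 : N ^+ 2 = (a + b) ^+ 2 + 2 * (t * u) ^+ 2 by rewrite /N tu2; lra.
have N_gt0 : 0 < N by rewrite /N; nra.
exists id, id, ((a + b) / N), (t * u / N), (vec3 s t s), (vec3 u v u); split.
- by split=> ? ? ->.
- have -> : ((a + b) / N) ^+ 2 + 2 * (t * u / N) ^+ 2 =
     ((a + b) ^+ 2 + 2 * (t * u) ^+ 2) / N ^+ 2 by field; rewrite gt_eqF.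
  by rewrite -N2 divff // expf_neq0 // gt_eqF.
- by rewrite sum3 !vec3E; lra.
- by rewrite sum3 !vec3E; lra.
rewrite !sum3 /rot_mx !vec3E /B1 /mx33 /= [X in _ <= X](_ : _ = eta) //.
transitivity (a + ((a + b) ^+ 2 + 2 * (t * u) ^+ 2) / N).
  by rewrite /a /b; field; rewrite gt_eqF.
by rewrite -N2 expr2 mulfK ?gt_eqF // /N addrC subrK.
Qed.

Lemma rot_witness_B2 : rot_witness B2 (eta4 R).
Proof.
exists (vec3 o1 o2 o0), (vec3 o1 o2 o0), (161 / 2339), (1650 / 2339),
  (vec3 (3 / 4) (43 / 100) (- (1 / 2))), (vec3 (3 / 4) (- (43 / 100)) (- (1 / 2))).
split; first by split; exact: vec3_inj.
- lra.
- by rewrite sum3 !vec3E; lra.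
- by rewrite sum3 !vec3E; lra.
apply: le_trans eta4_le _.
by rewrite !sum3 /rot_mx !vec3E /B2 /mx33 /=; lra.
Qed.

Lemma rot_witness_B3 : rot_witness B3 (eta4 R).
Proof.
exists (vec3 o2 o1 o0), id, (7 / 43), (- (30 / 43)),
  (vec3 (- (1 / 2)) (- (7 / 10)) (- (1 / 2))), (vec3 (1 / 2) (- (7 / 10)) (1 / 2)).
split; first by split; [exact: vec3_inj | move=> ? ? ->].
- lra.
- by rewrite sum3 !vec3E; lra.
- by rewrite sum3 !vec3E; lra.
apply: le_trans eta4_le _.
by rewrite !sum3 /rot_mx !vec3E /B3 /mx33 /=; lra.
Qed.

End Witnesses.

Section SumLemmas.
Variable R : realType.

Lemma sum_pred1_seq (T : eqType) (V : nmodType) (s : seq T) (k : T) (F : T -> V) :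
  uniq s -> \sum_(i <- s) (if i == k then F i else 0) = if k \in s then F k else 0.
Proof.
elim: s => [|a s IH] /=; first by rewrite big_nil.
move=> /andP[a_notin_s uniq_s]; rewrite big_cons IH // inE.
case: (eqVneq a k) => [<-|neq_ak] /=; last by rewrite add0r.
by rewrite (negPf a_notin_s) addr0.
Qed.

Lemma sum_if_inj (U : finType) (T : eqType) (V : nmodType) (h : U -> T) (F : U -> V) u :
  injective h -> \sum_u' (if h u == h u' then F u' else 0) = F u.
Proof.
move=> h_inj; rewrite (bigD1 u) //= eqxx big1 ?addr0 // => u' neq_u'u.
by rewrite (inj_eq h_inj) eq_sym (negPf neq_u'u).
Qed.

Lemma sum_inj_le (U : finType) (T : eqType) (h : U -> T) (s : seq T) (F : T -> R) :
  injective h -> uniq s -> (forall t, 0 <= F t) ->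
  \sum_u (if h u \in s then F (h u) else 0) <= \sum_(t <- s) F t.
Proof.
move=> h_inj uniq_s F_ge0.
have -> : \sum_u (if h u \in s then F (h u) else 0) =
    \sum_(t <- s) \sum_u (if t == h u then F (h u) else 0).
  by rewrite exchange_big /=; apply: eq_bigr => u _; rewrite (sum_pred1_seq _ (fun=> F (h u))).
apply: ler_sum => t _.
have [[u <-]|no_preimage] := pselect (exists u, h u = t).
  by rewrite (sum_if_inj (fun u => F (h u))).
by rewrite big1 // => u _; case: eqP => // eq_t; case: no_preimage; exists u.
Qed.

Lemma count_le1 (T : eqType) (s : seq T) (P : pred T) : uniq s ->
  (forall t t', P t -> P t' -> t = t') -> \sum_(t <- s) (if P t then 1 else 0 : R) <= 1.
Proof.
elim: s => [|a s IH] /=; first by rewrite big_nil ler01.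
move=> /andP[a_notin_s uniq_s] P_uniq; rewrite big_cons; case Pa: (P a); last by rewrite add0r IH.
rewrite big1_seq ?addr0 // => t /andP[_ t_in_s]; case Pt: (P t) => //.
by move: t_in_s; rewrite -(P_uniq _ _ Pa Pt) (negPf a_notin_s).
Qed.

Lemma sum_matching_le (T1 T2 : eqType) (rs : seq T1) (cs : seq T2) (P : T1 -> T2 -> bool)
    (A : T1 -> R) :
  (forall i, 0 <= A i) -> (forall i j j', P i j -> P i j' -> j = j') -> uniq cs ->
  \sum_(i <- rs) \sum_(j <- cs) (if P i j then A i else 0) <= \sum_(i <- rs) A i.
Proof.
move=> A_ge0 P_uniq uniq_cs; apply: ler_sum => i _.
have -> : \sum_(j <- cs) (if P i j then A i else 0) =
    A i * \sum_(j <- cs) (if P i j then 1 else 0).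
  by rewrite mulr_sumr; apply: eq_bigr => j _; case: (P i j); rewrite ?mulr1 ?mulr0.
by rewrite -[leRHS]mulr1 ler_wpM2l // count_le1 // => j j'; apply: P_uniq.
Qed.

Lemma sum_sandwich (T1 T2 : Type) (rs : seq T1) (cs : seq T2) (U W : finType)
    (V : pzSemiRingType) (F : T1 -> U -> V) (G : U -> W -> V) (H : W -> T2 -> V) :
  \sum_(i <- rs) \sum_(j <- cs) \sum_a \sum_b F i a * G a b * H b j =
  \sum_a \sum_b (\sum_(i <- rs) F i a) * G a b * (\sum_(j <- cs) H b j).
Proof.
transitivity (\sum_(i <- rs) \sum_a \sum_(j <- cs) \sum_b F i a * G a b * H b j).
  by apply: eq_bigr => i _; exact: exchange_big.
rewrite exchange_big; apply: eq_bigr => a _.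
transitivity (\sum_(i <- rs) \sum_b \sum_(j <- cs) F i a * G a b * H b j).
  by apply: eq_bigr => i _; exact: exchange_big.
rewrite exchange_big; apply: eq_bigr => b _.
by rewrite !mulr_suml; apply: eq_bigr => i _; rewrite mulr_sumr.
Qed.

End SumLemmas.

Section SchurNormBounds.
Variables (R : realType) (K : fieldType) (nrm : K -> R) (cj : K -> K)
  (emb : {rmorphism R -> K}).
Hypotheses (nrm_ge0 : forall z, 0 <= nrm z)
  (nrmM : forall z w, nrm (z * w) = nrm z * nrm w)
  (nrmD : forall z w, nrm (z + w) <= nrm z + nrm w)
  (nrm_cj : forall z, nrm (cj z) = nrm z)
  (cj_emb : forall r, cj (emb r) = emb r)
  (nrm_emb : forall r, nrm (emb r) = `|r|).
Hypothesis rot_mx_contraction_K : forall (c e : R) (y x : 'I_3 -> K),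
  c ^+ 2 + 2 * e ^+ 2 = 1 ->
  \sum_a nrm (y a) ^+ 2 <= 1 -> \sum_b nrm (x b) ^+ 2 <= 1 ->
  nrm (\sum_a \sum_b cj (y a) * emb (rot_mx c e a b) * x b) <= 1.

Local Notation opnorm := (opnorm_gen nrm cj).
Local Notation schur := (schur_gen nrm cj).

Lemma nrm0 : nrm 0 = 0.
Proof. by rewrite -(rmorph0 emb) nrm_emb normr0. Qed.

Lemma nrm1 : nrm 1 = 1.
Proof. by rewrite -(rmorph1 emb) nrm_emb normr1. Qed.

Lemma cj0 : cj 0 = 0.
Proof. by rewrite -(rmorph0 emb) cj_emb. Qed.

Lemma cj1 : cj 1 = 1.
Proof. by rewrite -(rmorph1 emb) cj_emb. Qed.

Lemma nrm_sum (T : Type) (s : seq T) (F : T -> K) :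
  nrm (\sum_(i <- s) F i) <= \sum_(i <- s) nrm (F i).
Proof.
elim: s => [|a s IH]; first by rewrite !big_nil nrm0.
by rewrite !big_cons; apply: le_trans (nrmD _ _) _; rewrite lerD2l.
Qed.

Lemma opnorm_entry_le (I J : countType) (X : I -> J -> K) :
  (opnorm X <= 1%:E)%E -> forall i j, nrm (X i j) <= 1.
Proof.
move=> X1 i j; rewrite -lee_fin; apply: le_trans X1.
apply: ereal_sup_ubound; exists [:: i], [:: j], (fun=> 1), (fun=> 1).
by split => //; rewrite ?big_seq1 ?nrm1 ?expr1n // cj1 mul1r mulr1.
Qed.

Section Embedding.
Variables (I J : countType) (f : 'I_3 -> I) (g : 'I_3 -> J).
Hypotheses (f_inj : injective f) (g_inj : injective g).

Definition extend0 (A : 'I_3 -> 'I_3 -> K) (i : I) (j : J) : K :=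
  \sum_a \sum_b (if (i == f a) && (j == g b) then A a b else 0).

Lemma extend0E A a b : extend0 A (f a) (g b) = A a b.
Proof.
transitivity (\sum_a' (if f a == f a' then
    \sum_b' (if g b == g b' then A a' b' else 0) else 0)).
  by apply: eq_bigr => a' _; case: (f a == f a') => //=; rewrite big1.
by rewrite (sum_if_inj (fun a' => \sum_b' _)) // (sum_if_inj (A a)).
Qed.

Lemma opnorm_extend0_le A :
  (forall y x : 'I_3 -> K, \sum_a nrm (y a) ^+ 2 <= 1 -> \sum_b nrm (x b) ^+ 2 <= 1 ->
     nrm (\sum_a \sum_b cj (y a) * A a b * x b) <= 1) ->
  (opnorm (extend0 A) <= 1%:E)%E.
Proof.
move=> A_contr; apply: ge_ereal_sup => _ [rs [cs [y [x [uniq_rs uniq_cs y1 x1 ->]]]]].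
rewrite lee_fin.
pose y' a := if f a \in rs then y (f a) else 0.
pose x' b := if g b \in cs then x (g b) else 0.
have -> : \sum_(i <- rs) \sum_(j <- cs) cj (y i) * extend0 A i j * x j =
    \sum_a \sum_b cj (y' a) * A a b * x' b.
  transitivity (\sum_(i <- rs) \sum_(j <- cs) \sum_a \sum_b
      (if i == f a then cj (y i) else 0) * A a b * (if j == g b then x j else 0)).
    apply: eq_bigr => i _; apply: eq_bigr => j _.
    rewrite /extend0 mulr_sumr mulr_suml; apply: eq_bigr => a _.
    rewrite mulr_sumr mulr_suml; apply: eq_bigr => b _.
    by case: (i == f a); case: (j == g b); rewrite /= ?mulr0 ?mul0r.
  rewrite sum_sandwich; apply: eq_bigr => a _; apply: eq_bigr => b _.
  rewrite !sum_pred1_seq // /y' /x'.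
  by case: (f a \in rs); case: (g b \in cs); rewrite ?cj0 ?mulr0 ?mul0r.
have restrict_le (T : countType) (h : 'I_3 -> T) (s : seq T) (z : T -> K) :
    injective h -> uniq s -> \sum_(t <- s) nrm (z t) ^+ 2 <= 1 ->
    \sum_a nrm (if h a \in s then z (h a) else 0) ^+ 2 <= 1.
  move=> h_inj uniq_s z1; apply: le_trans z1.
  have := sum_inj_le (F := fun t => nrm (z t) ^+ 2) h_inj uniq_s (fun=> sqr_ge0 _).
  by apply: le_trans; apply: ler_sum => a _; case: (h a \in s); rewrite ?nrm0 ?expr0n.
exact: A_contr (restrict_le _ _ _ _ f_inj uniq_rs y1) (restrict_le _ _ _ _ g_inj uniq_cs x1).
Qed.

Lemma opnorm_ge_restrict (Z : I -> J -> K) (y x : 'I_3 -> K) :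
  \sum_a nrm (y a) ^+ 2 <= 1 -> \sum_b nrm (x b) ^+ 2 <= 1 ->
  ((nrm (\sum_a \sum_b cj (y a) * Z (f a) (g b) * x b))%:E <= opnorm Z)%E.
Proof.
move=> y1 x1; apply: ereal_sup_ubound.
pose y' i := \sum_a (if i == f a then y a else 0).
pose x' j := \sum_b (if j == g b then x b else 0).
have y'E a : y' (f a) = y a by rewrite /y' sum_if_inj.
have x'E b : x' (g b) = x b by rewrite /x' sum_if_inj.
exists (map f (enum 'I_3)), (map g (enum 'I_3)), y', x'; split.
- by rewrite map_inj_uniq // enum_uniq.
- by rewrite map_inj_uniq // enum_uniq.
- by rewrite big_map big_enum /=; under eq_bigr do rewrite y'E.
- by rewrite big_map big_enum /=; under eq_bigr do rewrite x'E.
rewrite big_map big_enum /=; congr (nrm _)%:E; apply: eq_bigr => a _.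
by rewrite big_map big_enum /=; apply: eq_bigr => b _; rewrite y'E x'E.
Qed.

Lemma schur_ge_rot (E : I -> J -> bool) (c e : R) (y x : 'I_3 -> R) :
  c ^+ 2 + 2 * e ^+ 2 = 1 -> \sum_a y a ^+ 2 <= 1 -> \sum_b x b ^+ 2 <= 1 ->
  ((\sum_a \sum_b y a * (if E (f a) (g b) then rot_mx c e a b else 0) * x b)%:E
     <= schur E)%E.
Proof.
move=> ce1 y1 x1.
pose X := extend0 (fun a b => emb (rot_mx c e a b)).
have X1 : (opnorm X <= 1%:E)%E.
  by apply: opnorm_extend0_le => y' x'; exact: rot_mx_contraction_K.
have nrm_embsq (z : 'I_3 -> R) : \sum_a nrm (emb (z a)) ^+ 2 = \sum_a z a ^+ 2.
  by apply: eq_bigr => a _; rewrite nrm_emb real_normK ?num_real.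
apply: (@le_trans _ _ (opnorm (fun i j => if E i j then X i j else 0))); last first.
  by apply: ereal_sup_ubound; exists X.
have := opnorm_ge_restrict (fun i j => if E i j then X i j else 0) (y := emb \o y) (x := emb \o x).
rewrite !nrm_embsq => /(_ y1 x1); apply: le_trans; rewrite lee_fin.
set v := (\sum_a _)%R; set w := (\sum_a _)%R.
have -> : w = emb v.
  rewrite rmorph_sum; apply: eq_bigr => a _; rewrite rmorph_sum; apply: eq_bigr => b _.
  by rewrite /= /X extend0E cj_emb !rmorphM; case: (E (f a) (g b)); rewrite ?rmorph0.
by rewrite nrm_emb ler_norm.
Qed.

End Embedding.

Lemma schur_le1_of_matching (I J : countType) (E : I -> J -> bool) :
  (forall i j j', E i j -> E i j' -> j = j') -> (forall i i' j, E i j -> E i' j -> i = i') ->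
  (schur E <= 1%:E)%E.
Proof.
move=> uniqR uniqC; apply: ge_ereal_sup => _ [X [X1 ->]].
apply: ge_ereal_sup => _ [rs [cs [y [x [uniq_rs uniq_cs y1 x1 ->]]]]]; rewrite lee_fin.
have amgm i j : nrm (cj (y i) * (if E i j then X i j else 0) * x j) <=
    (if E i j then nrm (y i) ^+ 2 / 2 else 0) + (if E i j then nrm (x j) ^+ 2 / 2 else 0).
  case: (E i j); last by rewrite mulr0 mul0r nrm0 addr0.
  rewrite !nrmM nrm_cj; have := sqr_ge0 (nrm (y i) - nrm (x j)).
  have : nrm (y i) * nrm (X i j) * nrm (x j) <= nrm (y i) * nrm (x j).
    by rewrite -mulrA ler_wpM2l // ler_piMl // opnorm_entry_le.
  lra.
apply: le_trans (nrm_sum _ _) _.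
apply: (@le_trans _ _ (\sum_(i <- rs) \sum_(j <- cs)
  ((if E i j then nrm (y i) ^+ 2 / 2 else 0) + (if E i j then nrm (x j) ^+ 2 / 2 else 0)))).
  by apply: ler_sum => i _; apply: le_trans (nrm_sum _ _) _; apply: ler_sum => j _.
rewrite (eq_bigr _ (fun i _ => big_split _ _ _ _ _)) big_split /=.
have half_ge0 (z : K) : 0 <= nrm z ^+ 2 / 2 by rewrite divr_ge0 ?sqr_ge0.
have y_le : \sum_(i <- rs) \sum_(j <- cs) (if E i j then nrm (y i) ^+ 2 / 2 else 0) <=
    (\sum_(i <- rs) nrm (y i) ^+ 2) / 2.
  by rewrite mulr_suml; apply: sum_matching_le.
have x_le : \sum_(i <- rs) \sum_(j <- cs) (if E i j then nrm (x j) ^+ 2 / 2 else 0) <=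
    (\sum_(j <- cs) nrm (x j) ^+ 2) / 2.
  by rewrite exchange_big mulr_suml; apply: sum_matching_le => // j i i'; apply: uniqC.
lra.
Qed.

Lemma schur_ge_witness (I J : countType) (E : I -> J -> bool) B (eta : R) :
  rot_witness B eta -> has_induced E B -> (eta%:E <= schur E)%E.
Proof.
move=> [sg [tu [c [e [y [x [[sg_inj tu_inj] ce1 y1 x1 eta_le]]]]]]].
move=> [f [g [f_inj [g_inj [fgB|fgB]]]]].
- apply: le_trans (schur_ge_rot (inj_comp f_inj sg_inj) (inj_comp g_inj tu_inj) E ce1 y1 x1).
  rewrite lee_fin (le_trans eta_le) //; apply: ler_sum => a _; apply: ler_sum => b _.
  by rewrite /= fgB.
- (* a transposed copy of [B] is tested on the transpose [rot_mx c (- e)] *)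
  have ce1' : c ^+ 2 + 2 * (- e) ^+ 2 = 1 by rewrite sqrrN.
  apply: le_trans (schur_ge_rot (inj_comp f_inj tu_inj) (inj_comp g_inj sg_inj) E ce1' x1 y1).
  rewrite lee_fin (le_trans eta_le) // exchange_big /=.
  apply: ler_sum => a _; apply: ler_sum => b _; rewrite fgB rot_mx_tr.
  by case: (B (sg b) (tu a)); rewrite ?mulr0 ?mul0r // mulrC [y b * _]mulrC mulrA.
Qed.

Lemma maxdeg_eq2_of_schur_gen (I J : countType) (E : I -> J -> bool) : twin_free E ->
  (1%:E < schur E)%E -> (schur E < (eta4 R)%:E)%E -> maxdeg_eq2 E.
Proof.
move=> tfE gt1 lt_eta; split.
- move=> /(induced_of_deg3 tfE) induced.
  suff: ((eta4 R)%:E <= schur E)%E by rewrite leNgt lt_eta.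
  case: induced => [|[|]]; apply: schur_ge_witness;
    [exact: rot_witness_B1 | exact: rot_witness_B2 | exact: rot_witness_B3].
- apply: contrapT => /matching_of_maxdeg1[uniqR uniqC].
  by have := schur_le1_of_matching uniqR uniqC; rewrite leNgt gt1.
Qed.

End SchurNormBounds.

Lemma maxdeg_eq2_of_schur_norm (R : realType) (cplx : bool) (I J : countType)
    (E : I -> J -> bool) : twin_free E ->
  (1%:E < schur_norm R cplx E)%E -> (schur_norm R cplx E < (eta4 R)%:E)%E -> maxdeg_eq2 E.
Proof.
case: cplx.
- exact: (maxdeg_eq2_of_schur_gen (@normc_ge0 R) (@Normc.normcM R) (@le_normcD R)
    (@normc_conj R) (@conjc_real R) (@normc_real R) (@rot_mx_contraction R)).
- apply: (maxdeg_eq2_of_schur_gen (nrm := fun x : R => `|x|) (cj := id) (emb := idfun)) => //.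
  + exact: normrM.
  + exact: ler_normD.
  + exact: rot_mx_contraction_real.
Qed.

Theorem lemma6p3 (R : realType) (Rv Cv : countType) (E : Rv -> Cv -> bool)
  (hR : exists r : Rv, True) (hC : exists c : Cv, True)
  (htf : twin_free E) :
  (some_deg_ge E 3 ->
     has_induced E B1 \/ has_induced E B2 \/ has_induced E B3) /\
  (forall cplx : bool,
     (1%:E < schur_norm R cplx E)%E -> (schur_norm R cplx E < (eta4 R)%:E)%E ->
     maxdeg_eq2 E).
Proof.
split; first exact: induced_of_deg3.
by move=> cplx; apply: maxdeg_eq2_of_schur_norm.
Qed.
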